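(* Let $K=3$ and let $l>s$ be nonnegative integers. Then \[ h(l,\,l,\,s+1)\ \ge\ h(l+1,\,l,\,s). \]
   Context: For a vector $\vec n=(n_1,n_2,n_3)$ of nonnegative integers, the following random process is run: stocks start at $\vec n^{(0)}=\vec n$; at each step $t=1,2,\dots$, as long as at least two coordinates of $\vec n^{(t-1)}$ are nonzero, an index $i$ is chosen uniformly at random (independently of the past) among the indices with $n_i^{(t-1)}>0$, and $\vec n^{(t)}=\vec n^{(t-1)}-\vec e_i$ ($\vec e_i$ the $i$-th standard unit vector). The process stops at the first time $T$ at which at most one coordinate is nonzero, and $h(\vec n)=\mathbb{E}[T]$. Equivalently, with $\operatorname{support}(\vec n)=\{i:n_i\ne 0\}$: $h(\vec n)=0$ if $|\operatorname{support}(\vec n)|\le1$, and otherwise $h(\vec n)=1+\frac{1}{|\operatorname{support}(\vec n)|}\sum_{i\in\operatorname{support}(\vec n)}h(\vec n-\vec e_i)$. *)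

From mathcomp Require Import all_boot all_order all_algebra.
Set Implicit Arguments. Unset Strict Implicit. Unset Printing Implicit Defensive.
Import Order.TTheory GRing.Theory Num.Theory.
Local Open Scope ring_scope.

(* Expected absorption time h(n1,n2,n3) for K = 3, as a rational number.
   h n = 0 if at most one coordinate is nonzero; otherwise
   h n = 1 + (1/|supp n|) * sum_{i in supp n} h (n - e_i).
   [h_fuel f n] computes this recursion with fuel f; since each step lowers
   n1+n2+n3 by one, fuel n1+n2+n3 suffices, see [h]. *)
Fixpoint h_fuel (f : nat) (n1 n2 n3 : nat) : rat :=
  match f with
  | O => 0
  | S f' =>
    let s := ((n1 != 0%N) + (n2 != 0%N) + (n3 != 0%N))%N in
    if (s <= 1)%N then 0
    else 1 + (s%:R)^-1 *
      ((if n1 != 0%N then h_fuel f' n1.-1 n2 n3 else 0) +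
       (if n2 != 0%N then h_fuel f' n1 n2.-1 n3 else 0) +
       (if n3 != 0%N then h_fuel f' n1 n2 n3.-1 else 0))
  end.

Definition h (n1 n2 n3 : nat) : rat := h_fuel (n1 + n2 + n3) n1 n2 n3.

From mathcomp Require Import all_boot all_order all_algebra.
From mathcomp Require Import zify lra.
Import Order.TTheory GRing.Theory Num.Theory.
Local Open Scope ring_scope.

(* Write dh13 a b c = h(a-1,b,c+1) - h(a,b,c) for the effect of moving one
   unit from the first stock to the third; the claim is dh13 (l+1) l s >= 0.
   Subtracting the recursions of the two values of h cancels the constant 1,
   so dh13 at (a,b,c) is the mean of dh13 at the three points one step below
   (for c = 0 the third term is a two-stock difference).  Hence dh13 >= 0 on
   c < a, b <= a by induction on a + b + c, from the boundary values
   dh13 (c+1) b c = 0 (swap the first and third stocks) and the two-stock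
   case b = 0, which is the same argument one dimension lower.  At b = a the
   mean involves dh13 (a-1) a c, outside that region; it is controlled by
   proving simultaneously dh13 a b c + dh13 b a c >= 0 for c < a < b, whose
   own averaging step stays within the two invariants because the c = 0
   correction terms cancel by symmetry. *)

Lemma h_fuel_swap12 f a b c : h_fuel f a b c = h_fuel f b a c.
Proof.
elim: f a b c => [//|f IH] a b c /=.
rewrite (addnC (a != 0%N)); case: ifP => // _.
rewrite [h_fuel f a.-1 _ _]IH [h_fuel f a _ c.-1]IH [h_fuel f a b.-1 _]IH.
by rewrite (addrC (if a != 0%N then _ else _)).
Qed.

Lemma h_fuel_swap23 f a b c : h_fuel f a b c = h_fuel f a c b.
Proof.
elim: f a b c => [//|f IH] a b c /=.
rewrite (addnAC (a != 0%N)); case: ifP => // _.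
rewrite [h_fuel f a.-1 _ _]IH [h_fuel f a _ c.-1]IH [h_fuel f a b.-1 _]IH.
by rewrite addrAC.
Qed.

Lemma h_fuel_ge0 f a b c : 0 <= h_fuel f a b c.
Proof.
elim: f a b c => [//|f IH] a b c /=; case: ifP => // _.
apply: addr_ge0 => //; apply: mulr_ge0; first by rewrite invr_ge0 ler0n.
by apply: addr_ge0; [apply: addr_ge0|]; case: ifP.
Qed.

Arguments h : simpl never.

Lemma h_swap12 a b c : h a b c = h b a c.
Proof. by rewrite /h (addnC a b) h_fuel_swap12. Qed.

Lemma h_swap23 a b c : h a b c = h a c b.
Proof. by rewrite /h (addnAC a b c) h_fuel_swap23. Qed.

Lemma h_swap13 a b c : h a b c = h c b a.
Proof. by rewrite h_swap12 h_swap23 h_swap12. Qed.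

Lemma h_ge0 a b c : 0 <= h a b c.
Proof. exact: h_fuel_ge0. Qed.

Lemma h_n00 a : h a 0 0 = 0.
Proof. by rewrite /h; case: a => [|a] //=; rewrite addn0. Qed.

Lemma h_fuelE f a b c : f = (a + b + c)%N -> h_fuel f a b c = h a b c.
Proof. by move->. Qed.

Lemma h_rec3 x y z : h x.+1 y.+1 z.+1 =
  1 + 3%:R^-1 * (h x y.+1 z.+1 + h x.+1 y z.+1 + h x.+1 y.+1 z).
Proof.
rewrite {1}/h (_ : (x.+1 + y.+1 + z.+1 = (x + y.+1 + z.+1).+1)%N) /=; last by lia.
by rewrite !h_fuelE //; lia.
Qed.

Lemma h_rec2 x y : h x.+1 y.+1 0 = 1 + 2%:R^-1 * (h x y.+1 0 + h x.+1 y 0).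
Proof.
rewrite {1}/h (_ : (x.+1 + y.+1 + 0 = (x + y.+1 + 0).+1)%N) /=; last by lia.
by rewrite addr0 !h_fuelE //; lia.
Qed.

Definition dh13 a b c := h a.-1 b c.+1 - h a b c.

Lemma dh13_balanced b c : dh13 c.+1 b c = 0.
Proof. by rewrite /dh13 /= h_swap13 subrr. Qed.

Lemma dh13_0_rec a c :
  dh13 a.+2 0 c.+1 = 2%:R^-1 * (dh13 a.+1 0 c.+1 + dh13 a.+2 0 c).
Proof.
rewrite /dh13 /= ![h _ 0 _]h_swap23 (h_rec2 a c.+1) (h_rec2 a.+1 c); lra.
Qed.

Lemma dh13_0_ge0 a c : (c < a)%N -> 0 <= dh13 a 0 c.
Proof.
have [n] := ubnP (a + c); elim: n a c => // n IH a c lt_n lt_ca.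
have [->|/eqP ne_a] := eqVneq a c.+1; first by rewrite dh13_balanced.
case: c lt_n lt_ca ne_a => [|c] lt_n lt_ca ne_a.
  by rewrite /dh13 h_n00 subr0 h_ge0.
case: a lt_n lt_ca ne_a => [|[|a]] lt_n lt_ca ne_a; try lia.
rewrite dh13_0_rec; apply: mulr_ge0; first by rewrite invr_ge0 ler0n.
by apply: addr_ge0; apply: IH; lia.
Qed.

Lemma dh13_0_antisym a b : dh13 a.+1 0 b = - dh13 b.+1 0 a.
Proof. by rewrite /dh13 /= (h_swap13 b) (h_swap13 b.+1) opprB. Qed.

(* For c = 0, h a.-1 b 1 has three nonzero stocks but h a b 0 only two; the
   mismatch of the weights 1/3 and 1/2 leaves half a two-stock difference in
   place of the missing step on the third stock. *)
Definition dh13_dec3 a b c :=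
  if c is c'.+1 then dh13 a b c' else 2%:R^-1 * dh13 a 0 b.-1.

Lemma dh13_rec a b c : dh13 a.+2 b.+1 c =
  3%:R^-1 * (dh13 a.+1 b.+1 c + dh13 a.+2 b c + dh13_dec3 a.+2 b.+1 c).
Proof.
rewrite /dh13_dec3 /dh13 /=; case: c => [|c].
  rewrite (h_rec3 a b 0) (h_rec2 a.+1 b) ![h _ 0 _]h_swap23; lra.
rewrite (h_rec3 a b c.+1) (h_rec3 a.+1 b c); lra.
Qed.

Lemma mean3_pairwise_ge0 (R : realFieldType) (x1 x2 x3 y1 y2 y3 : R) :
  0 <= x1 + y1 -> 0 <= x2 + y2 -> 0 <= x3 + y3 ->
  0 <= 3%:R^-1 * (x1 + x2 + x3) + 3%:R^-1 * (y2 + y1 + y3).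
Proof. lra. Qed.

Section InductionStep.

Variable n : nat.
Hypothesis IH_ge0 : forall a b c,
  (a + b + c < n)%N -> (c < a)%N -> (b <= a)%N -> 0 <= dh13 a b c.
Hypothesis IH_pair : forall a b c,
  (a + b + c < n)%N -> (c < a < b)%N -> 0 <= dh13 a b c + dh13 b a c.

Lemma dh13_ge0_step a b c :
  (a + b + c <= n)%N -> (c < a)%N -> (b <= a)%N -> 0 <= dh13 a b c.
Proof.
move=> le_n lt_ca le_ba.
have [->|/eqP ne_a] := eqVneq a c.+1; first by rewrite dh13_balanced.
case: b le_n le_ba => [|b] le_n le_ba; first exact: dh13_0_ge0.
case: a le_n lt_ca le_ba ne_a => [|[|a]] le_n lt_ca le_ba ne_a; try lia.
rewrite dh13_rec; apply: mulr_ge0; first by rewrite invr_ge0 ler0n.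
have dec3_ge0 : 0 <= dh13_dec3 a.+2 b.+1 c.
  case: c le_n lt_ca ne_a => [|c] le_n lt_ca ne_a /=; last by apply: IH_ge0; lia.
  by apply: mulr_ge0; [rewrite invr_ge0 ler0n | apply: dh13_0_ge0; lia].
have [le_ba'|lt_ab] := leqP b a.
  have ge0_1 : 0 <= dh13 a.+1 b.+1 c by apply: IH_ge0; lia.
  have ge0_2 : 0 <= dh13 a.+2 b c by apply: IH_ge0; lia.
  exact: addr_ge0 (addr_ge0 ge0_1 ge0_2) dec3_ge0.
have eq_b : b = a.+1 by lia.
subst b.
have pair_ge0 : 0 <= dh13 a.+1 a.+2 c + dh13 a.+2 a.+1 c by apply: IH_pair; lia.
exact: addr_ge0 pair_ge0 dec3_ge0.
Qed.

Lemma dh13_pair_ge0_step a b c :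
  (a + b + c <= n)%N -> (c < a < b)%N -> 0 <= dh13 a b c + dh13 b a c.
Proof.
move=> le_n /andP[lt_ca lt_ab].
have [->|/eqP ne_a] := eqVneq a c.+1.
  by rewrite dh13_balanced add0r; apply: dh13_ge0_step; lia.
case: a le_n lt_ca lt_ab ne_a => [|[|a]] le_n lt_ca lt_ab ne_a; try lia.
case: b le_n lt_ab => [|[|[|b]]] le_n lt_ab; try lia.
rewrite (dh13_rec a b.+2) (dh13_rec b.+1 a.+1).
have pair_3 : 0 <= dh13_dec3 a.+2 b.+3 c + dh13_dec3 b.+3 a.+2 c.
  case: c le_n lt_ca ne_a => [|c] le_n lt_ca ne_a /=; last by apply: IH_pair; lia.
  by rewrite dh13_0_antisym -mulrDr addNr mulr0.
have pair_1 : 0 <= dh13 a.+1 b.+3 c + dh13 b.+3 a.+1 c by apply: IH_pair; lia.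
have pair_2 : 0 <= dh13 a.+2 b.+2 c + dh13 b.+2 a.+2 c.
  have [eq_ab|/eqP ne_ab] := eqVneq a b; last by apply: IH_pair; lia.
  by rewrite -eq_ab; apply: addr_ge0; apply: IH_ge0; lia.
exact: mean3_pairwise_ge0 pair_1 pair_2 pair_3.
Qed.

End InductionStep.

Lemma dh13_ge0 a b c : (c < a)%N -> (b <= a)%N -> 0 <= dh13 a b c.
Proof.
suff ge0_and_pair n : (forall a b c,
    (a + b + c < n)%N -> (c < a)%N -> (b <= a)%N -> 0 <= dh13 a b c) /\
  (forall a b c,
    (a + b + c < n)%N -> (c < a < b)%N -> 0 <= dh13 a b c + dh13 b a c).
  by apply: (ge0_and_pair (a + b + c).+1).1.
clear a b c; elim: n => [|n [IH_ge0 IH_pair]]; first by split.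
by split=> a b c; rewrite ltnS; [apply: dh13_ge0_step | apply: dh13_pair_ge0_step].
Qed.

Theorem lemma4 (l s : nat) (hls : (s < l)%N) :
  h (l + 1)%N l s <= h l l s.+1.
Proof.
have := @dh13_ge0 (l + 1) l s ltac:(lia) ltac:(lia).
by rewrite /dh13 addn1 subr_ge0.
Qed.
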